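(* Let $A\in\mathbb{C}^{m\times n}$ be such that $\mathrm{rank}(AA^{\sim})=\mathrm{rank}(A^{\sim}A)=\mathrm{rank}(A)$. Then for arbitrary nonnegative integers $k$ and $l$, $$A^{\mathfrak{m}}=(A^{\sim}A)^kA^{\sim}\left[(A^{\sim}A)^{k+l+1}A^{\sim}\right]^{(1)}(A^{\sim}A)^lA^{\sim},$$ where $\left[(A^{\sim}A)^{k+l+1}A^{\sim}\right]^{(1)}$ is any $\{1\}$-inverse of $(A^{\sim}A)^{k+l+1}A^{\sim}$.
   Context: For a positive integer $k$, the Minkowski metric matrix of order $k$ is $G_k=\mathrm{diag}(1,-I_{k-1})$ (with $G_1=(1)$). For $M\in\mathbb{C}^{p\times q}$, the Minkowski adjoint is $M^{\sim}=G_qM^*G_p$, where $M^*$ is the conjugate transpose. The Minkowski inverse of $A\in\mathbb{C}^{m\times n}$, denoted $A^{\mathfrak{m}}$, is the (unique) matrix $X\in\mathbb{C}^{n\times m}$ with $AXA=A$, $XAX=X$, $(AX)^{\sim}=AX$, $(XA)^{\sim}=XA$; it exists under the stated rank hypothesis. A $\{1\}$-inverse of $M$ is any $M^{(1)}$ with $MM^{(1)}M=M$; $(A^{\sim}A)^0=I_n$. *)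

From HB Require Import structures.
From mathcomp Require Import all_boot all_order all_algebra.
Set Implicit Arguments. Unset Strict Implicit. Unset Printing Implicit Defensive.
Import Order.TTheory GRing.Theory Num.Theory.
Local Open Scope ring_scope.

(* Complex scalars: any numeric closed field C (e.g. the complex numbers),
   with conjugation z^* . *)

Definition minkG (C : numClosedFieldType) (k : nat) : 'M[C]_k :=
  \matrix_(i, j) (if i == j then (if nat_of_ord i == 0%N then 1 else -1) else 0).

Definition ctrmx (C : numClosedFieldType) (p q : nat) (M : 'M[C]_(p, q)) : 'M[C]_(q, p) :=
  map_mx Num.conj M^T.

Definition madj (C : numClosedFieldType) (p q : nat) (M : 'M[C]_(p, q)) : 'M[C]_(q, p) :=
  minkG C q *m ctrmx M *m minkG C p.

Definition is_minkowski_inverse (C : numClosedFieldType) (m n : nat)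
  (A : 'M[C]_(m, n)) (X : 'M[C]_(n, m)) : Prop :=
  [/\ A *m X *m A = A, X *m A *m X = X,
      madj (A *m X) = A *m X & madj (X *m A) = X *m A].

Definition is_inverse1 (C : numClosedFieldType) (p q : nat)
  (M : 'M[C]_(p, q)) (Y : 'M[C]_(q, p)) : Prop := M *m Y *m M = M.

From HB Require Import structures.
From mathcomp Require Import all_boot all_order all_algebra.
Import Order.TTheory GRing.Theory Num.Theory.
Local Open Scope ring_scope.
Set Implicit Arguments.
Unset Strict Implicit.

(* Write S for the Minkowski adjoint of A.  The rank hypotheses say that the
   row space of A is that of S A and its column space that of A S; through
   the adjoint this yields S = S A S Z = Z' S A S, so every (S A)^i S can be
   recovered from (S A)^(i+j) S on either side.  Hence, with U = (S A)^k S and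
   V = (S A)^l S, the matrix E = U Y V built from a {1}-inverse Y of
   V A U = (S A)^(k+l+1) S is an outer inverse of A with E A S = S = S A E.
   Those two identities make E A and A E fixed by the adjoint, and the
   Penrose-type equations then pin E down uniquely. *)

Section MatrixPowers.

Variable R : pzSemiRingType.

Lemma mulmx_expr_comm p q (X : 'M[R]_(p, q)) (Y : 'M[R]_(q, p)) j :
  (X *m Y) ^+ j *m X = X *m (Y *m X) ^+ j.
Proof.
elim: j => [|j IHj]; first by rewrite !expr0 mul1mx mulmx1.
by rewrite !exprSr -!mulmxE -mulmxA -(mulmxA X Y X) mulmxA IHj -mulmxA.
Qed.

Variables (m n : nat) (S : 'M[R]_(n, m)) (A : 'M[R]_(m, n)).

Lemma expr_mulmx_absorbr (Z : 'M[R]_m) i j :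
  S = S *m A *m S *m Z ->
  (S *m A) ^+ i *m S = (S *m A) ^+ (i + j) *m S *m Z ^+ j.
Proof.
move=> hS; elim: j => [|j IHj]; first by rewrite addn0 expr0 mulmx1.
by rewrite IHj addnS exprSr exprS -!mulmxE {2}hS !mulmxA.
Qed.

Lemma expr_mulmx_absorbl (Z : 'M[R]_n) i j :
  S = Z *m S *m A *m S ->
  (S *m A) ^+ i *m S = Z ^+ j *m (S *m A) ^+ (i + j) *m S.
Proof.
move=> hS; elim: j => [|j IHj]; first by rewrite addn0 expr0 mul1mx.
rewrite IHj addnS exprSr exprS -!mulmxE -!mulmxA !mulmx_expr_comm.
by rewrite {1}hS !mulmxA.
Qed.

End MatrixPowers.

Lemma outer_inverse_mulmx (R : pzSemiRingType) m n p q (M : 'M[R]_(m, n))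
    (U : 'M[R]_(n, p)) (V : 'M[R]_(q, m)) (Y : 'M[R]_(p, q)) L K :
  U = L *m (V *m M *m U) -> V = V *m M *m U *m K ->
  V *m M *m U *m Y *m (V *m M *m U) = V *m M *m U ->
  let E := U *m Y *m V in
  [/\ E *m M *m E = E, E *m M *m U = U & V *m M *m E = V].
Proof.
move=> hU hV hY E.
have EMU : E *m M *m U = U.
  transitivity (L *m (V *m M *m U *m Y *m (V *m M *m U))).
    by rewrite /E {1}hU !mulmxA.
  by rewrite hY -hU.
have VME : V *m M *m E = V.
  transitivity (V *m M *m U *m Y *m (V *m M *m U) *m K).
    by rewrite /E {2}hV !mulmxA.
  by rewrite hY -hV.
split=> //; transitivity (U *m Y *m (V *m M *m E)); last by rewrite VME.
by rewrite /E !mulmxA.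
Qed.

Lemma power_outer_inverse (R : pzSemiRingType) m n (A : 'M[R]_(m, n))
    (S : 'M[R]_(n, m)) Z Z' k l (Y : 'M[R]_(m, n)) :
  S = S *m A *m S *m Z -> S = Z' *m S *m A *m S ->
  (S *m A) ^+ (k + l + 1) *m S *m Y *m ((S *m A) ^+ (k + l + 1) *m S) =
    (S *m A) ^+ (k + l + 1) *m S ->
  let E := (S *m A) ^+ k *m S *m Y *m (S *m A) ^+ l *m S in
  [/\ E *m A *m E = E, E *m A *m S = S & S *m A *m E = S].
Proof.
move=> hSr hSl hY E.
have VAU : (S *m A) ^+ l *m S *m A *m ((S *m A) ^+ k *m S) =
           (S *m A) ^+ (k + l + 1) *m S.
  have -> : (k + l + 1 = l.+1 + k)%N by rewrite addn1 addSn addnC.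
  by rewrite exprD exprSr -!mulmxE !mulmxA.
have hU : (S *m A) ^+ k *m S =
          Z' ^+ (l + 1) *m ((S *m A) ^+ l *m S *m A *m ((S *m A) ^+ k *m S)).
  by rewrite VAU -addnA (expr_mulmx_absorbl k (l + 1) hSl) !mulmxA.
have hV : (S *m A) ^+ l *m S =
          (S *m A) ^+ l *m S *m A *m ((S *m A) ^+ k *m S) *m Z ^+ (k + 1).
  by rewrite VAU addnAC addnC (expr_mulmx_absorbr l (k + 1) hSr).
rewrite -VAU in hY.
have [EAE EAU VAE] := outer_inverse_mulmx hU hV hY.
have hSU : S = (S *m A) ^+ k *m S *m Z ^+ k.
  by have := expr_mulmx_absorbr 0 k hSr; rewrite expr0 mul1mx add0n.
have hSV : S = Z' ^+ l *m ((S *m A) ^+ l *m S).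
  by have := expr_mulmx_absorbl 0 l hSl; rewrite expr0 mul1mx add0n mulmxA.
have defE : (S *m A) ^+ k *m S *m Y *m ((S *m A) ^+ l *m S) = E.
  by rewrite /E !mulmxA.
clearbody E.
rewrite defE !mulmxA in EAE EAU VAE.
split=> //; first by rewrite {1}hSU !mulmxA EAU -hSU.
by rewrite {1}hSV -!(mulmxA (Z' ^+ l)) VAE -hSV.
Qed.

Lemma rank_mulmx_eq_factorl (F : fieldType) m n p
    (B : 'M[F]_(p, m)) (A : 'M[F]_(m, n)) :
  \rank (B *m A) = \rank A -> exists W, A = W *m (B *m A).
Proof.
move=> hrk; apply/submxP.
by move: (mxrank_leqif_eq (submxMl B A)).2; rewrite hrk eqxx => /esym/andP[].
Qed.

Lemma rank_mulmx_eq_factorr (F : fieldType) m n p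
    (A : 'M[F]_(m, n)) (B : 'M[F]_(n, p)) :
  \rank (A *m B) = \rank A -> exists D, A = A *m B *m D.
Proof.
rewrite -mxrank_tr -[\rank A]mxrank_tr trmx_mul => /rank_mulmx_eq_factorl[W hW].
by exists W^T; rewrite -[A]trmxK {1}hW trmx_mul trmx_mul !trmxK.
Qed.

Section MinkowskiAdjoint.

Variable C : numClosedFieldType.

Lemma mulmx_minkG (k : nat) : minkG C k *m minkG C k = 1%:M.
Proof.
apply/matrixP => i j; rewrite !mxE (bigD1 i) //= big1 ?addr0.
  rewrite !mxE eqxx; have [->|_] := eqVneq i j; rewrite ?eqxx.
    by case: (_ == _); rewrite ?mulrNN mulr1.
  by rewrite mulr0.
by move=> i' /negbTE hi'; rewrite !mxE eq_sym hi' mul0r.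
Qed.

Lemma ctrmxM p q r (M : 'M[C]_(p, q)) (N : 'M[C]_(q, r)) :
  ctrmx (M *m N) = ctrmx N *m ctrmx M.
Proof. by rewrite /ctrmx trmx_mul map_mxM. Qed.

Lemma ctrmxK p q (M : 'M[C]_(p, q)) : ctrmx (ctrmx M) = M.
Proof. by apply/matrixP => i j; rewrite !mxE conjCK. Qed.

Lemma ctrmx_minkG k : ctrmx (minkG C k) = minkG C k.
Proof.
apply/matrixP => i j; rewrite !mxE.
have [->|_] := eqVneq i j; last by rewrite rmorph0.
by case: (_ == _); rewrite ?rmorph1 ?rmorphN1.
Qed.

Lemma madjM p q r (M : 'M[C]_(p, q)) (N : 'M[C]_(q, r)) :
  madj (M *m N) = madj N *m madj M.
Proof.
rewrite /madj ctrmxM !mulmxA -[_ *m minkG C q *m minkG C q]mulmxA.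
by rewrite mulmx_minkG mulmx1.
Qed.

Lemma madjK p q : cancel (@madj C p q) (@madj C q p).
Proof.
move=> M; rewrite /madj !ctrmxM ctrmxK !ctrmx_minkG !mulmxA mulmx_minkG mul1mx.
by rewrite -mulmxA mulmx_minkG mulmx1.
Qed.

Lemma madj_fixr p (Q : 'M[C]_p) : Q *m madj Q = madj Q -> madj Q = Q.
Proof. by move=> hQ; rewrite -[RHS]madjK -{2}hQ madjM madjK hQ. Qed.

Lemma madj_fixl p (Q : 'M[C]_p) : madj Q *m Q = madj Q -> madj Q = Q.
Proof. by move=> hQ; rewrite -[RHS]madjK -{2}hQ madjM madjK hQ. Qed.

Lemma minkowski_inverse_of_outer m n (A : 'M[C]_(m, n)) E :
  E *m A *m E = E -> E *m A *m madj A = madj A -> madj A *m A *m E = madj A ->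
  is_minkowski_inverse A E.
Proof.
move=> EAE EAS SAE.
have sEA : madj (E *m A) = E *m A.
  by apply: madj_fixr; rewrite madjM mulmxA EAS.
have sAE : madj (A *m E) = A *m E.
  by apply: madj_fixl; rewrite madjM -mulmxA (mulmxA (madj A)) SAE.
have AEA : A *m E *m A = A.
  by apply: (can_inj (@madjK _ _)); rewrite madjM sAE mulmxA SAE.
by split.
Qed.

Lemma minkowski_inverse_unique m n (A : 'M[C]_(m, n)) X E :
  is_minkowski_inverse A X -> is_minkowski_inverse A E -> X = E.
Proof.
case=> AXA XAX sAX sXA [AEA EAE sAE sEA].
have AX_AE : A *m X = A *m E.
  by rewrite -sAX -{1}AEA -mulmxA madjM sAX sAE mulmxA AXA.
have XA_EA : X *m A = E *m A.
  rewrite -sXA -{1}AEA !mulmxA -(mulmxA (X *m A)) madjM sEA sXA.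
  by rewrite mulmxA -!(mulmxA E) AXA.
by rewrite -XAX -mulmxA AX_AE mulmxA XA_EA EAE.
Qed.

End MinkowskiAdjoint.

Theorem theorem8p1 (C : numClosedFieldType) (m n : nat) (A : 'M[C]_(m, n))
  (hm : (0 < m)%N) (hn : (0 < n)%N)
  (hrk1 : \rank (A *m madj A) = \rank A)
  (hrk2 : \rank (madj A *m A) = \rank A)
  (k l : nat) (Y : 'M[C]_(m, n))
  (hY : is_inverse1 (((madj A *m A) ^+ (k + l + 1)) *m madj A) Y) :
  let E := (madj A *m A) ^+ k *m madj A *m Y *m (madj A *m A) ^+ l *m madj A in
  is_minkowski_inverse A E /\ (forall X, is_minkowski_inverse A X -> X = E).
Proof.
move=> E.
have [W hW] := rank_mulmx_eq_factorl hrk2.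
have [D hD] := rank_mulmx_eq_factorr hrk1.
have hSA : madj A = madj A *m A *m madj W by rewrite {1}hW madjM madjM madjK.
have hAS : madj A = madj D *m A *m madj A.
  by rewrite {1}hD madjM madjM madjK mulmxA.
have hSr : madj A = madj A *m A *m madj A *m (D *m madj W).
  by rewrite {1}hSA {2}hD !mulmxA.
have hSl : madj A = madj D *m W *m madj A *m A *m madj A.
  by rewrite {1}hAS {1}hW !mulmxA.
have [EAE EAS SAE] := power_outer_inverse hSr hSl hY.
have hE : is_minkowski_inverse A E := minkowski_inverse_of_outer EAE EAS SAE.
by split=> // X hX; apply: minkowski_inverse_unique hX hE.
Qed.
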